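(* Let $G$ be a $(P_7, C_4, \text{gem})$-free graph, let $v_1v_2\cdots v_7v_1$ be a $7$-hole of $G$, $A=\{v_1,\dots,v_7\}$, indices modulo 7. For each $i$ let $X_i=\{x\in N(A): N(x)\cap A=\{v_i,v_{i+3}\}\}$, $Y_i=\{x\in N(A): N(x)\cap A=\{v_i,v_{i+1},v_{i+2}\}\}$, $Z_i=\{x\in N(A): N(x)\cap A=\{v_i,v_{i+3},v_{i+4}\}\}$. Then: (a) $N(A)=\bigcup_{i=1}^7(X_i\cup Y_i\cup Z_i)$; (b) for each $i$, $X_i\cup Z_i$ and $Y_i$ are cliques; (c) $Y_i$ is complete to $Y_{i+1}\cup Y_{i+6}$ and anticomplete to $Y_{i+2}\cup Y_{i+3}\cup Y_{i+4}\cup Y_{i+5}$; (d) either $X_i=\emptyset$ or $X_{i+2}\cup X_{i+5}=\emptyset$; and $X_i$ is anticomplete to $X_{i+1}\cup X_{i+3}\cup X_{i+4}\cup X_{i+6}$; (e) $X_i$ is complete to $Y_{i+2}\cup Y_{i+6}$ and anticomplete to $Y_i\cup Y_{i+1}\cup Y_{i+3}\cup Y_{i+4}\cup Y_{i+5}$; (f) either $Z_i=\emptyset$ or $Z_{i+3}\cup Z_{i+4}=\emptyset$; and $Z_i$ is anticomplete to $Z_{i+1}\cup Z_{i+2}\cup Z_{i+5}\cup Z_{i+6}$; (g) either $Z_i=\emptyset$ or $X_i\cup X_{i+4}\cup X_{i+6}=\emptyset$; and $Z_i$ is anticomplete to $X_{i+1}\cup X_{i+2}\cup X_{i+3}\cup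 X_{i+5}$; (h) $Z_i$ is complete to $Y_{i+2}\cup Y_{i+3}\cup Y_{i+6}$ and anticomplete to $Y_i\cup Y_{i+1}\cup Y_{i+4}\cup Y_{i+5}$.
   Context: All graphs are finite and simple. $G$ is $H$-free if it has no induced subgraph isomorphic to $H$; $P_t$, $C_t$ are the path and cycle on $t$ vertices; a gem is an induced $P_4$ plus a vertex adjacent to all its four vertices. A $k$-hole is an induced cycle of length $k$. For $X\subseteq V(G)$, $N(X)$ is the set of vertices outside $X$ with a neighbour in $X$. A set $S$ is complete (anticomplete) to $T$ if every vertex of $S$ is adjacent (non-adjacent) to every vertex of $T$. *)

From mathcomp Require Import all_boot all_order.
Set Implicit Arguments. Unset Strict Implicit. Unset Printing Implicit Defensive.

Definition path_rel (t : nat) : rel 'I_t :=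
  fun i j => (val j == (val i).+1) || (val i == (val j).+1).
Definition cycle_rel (t : nat) : rel 'I_t :=
  fun i j => (val j == (val i).+1 %% t) || (val i == (val j).+1 %% t).
Definition gem_rel : rel 'I_5 :=
  fun i j => if (val i == 4) then val j != 4
             else if (val j == 4) then true
             else (val j == (val i).+1) || (val i == (val j).+1).

Definition induced_copy (T : finType) (adj : rel T) (k : nat) (H : rel 'I_k)
  (f : 'I_k -> T) : Prop :=
  injective f /\ forall i j : 'I_k, i != j -> adj (f i) (f j) = H i j.

Definition Hfree (T : finType) (adj : rel T) (k : nat) (H : rel 'I_k) : Prop :=
  ~ exists f : 'I_k -> T, induced_copy adj H f.

(* v is a 7-hole v_0 v_1 ... v_6 v_0 (indices mod 7) *)
Definition hole7 (T : finType) (adj : rel T) (v : 'I_7 -> T) : Prop :=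
  induced_copy adj (@cycle_rel 7) v.

Definition sh (i : 'I_7) (k : nat) : 'I_7 := inord ((val i + k) %% 7).

Section Sets.
Variables (T : finType) (adj : rel T) (v : 'I_7 -> T).

Definition Aset : {set T} := [set v i | i : 'I_7].
Definition NA : {set T} := [set x | (x \notin Aset) && [exists a in Aset, adj x a]].
Definition nbA (x : T) : {set T} := [set a in Aset | adj x a].

Definition Xs (i : 'I_7) : {set T} :=
  [set x in NA | nbA x == [set v i; v (sh i 3)]].
Definition Ys (i : 'I_7) : {set T} :=
  [set x in NA | nbA x == [set v i; v (sh i 1); v (sh i 2)]].
Definition Zs (i : 'I_7) : {set T} :=
  [set x in NA | nbA x == [set v i; v (sh i 3); v (sh i 4)]].

Definition clique (S : {set T}) : Prop :=
  forall x y, x \in S -> y \in S -> x != y -> adj x y.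
Definition complete (S U : {set T}) : Prop :=
  forall x y, x \in S -> y \in U -> adj x y.
Definition anticomplete (S U : {set T}) : Prop :=
  forall x y, x \in S -> y \in U -> ~~ adj x y.
End Sets.

From mathcomp Require Import all_boot all_order.
From mathcomp Require Import zify.
Set Implicit Arguments. Unset Strict Implicit. Unset Printing Implicit Defensive.

(* Every assertion of the theorem is about at most two vertices x, y of
   N(A).  Such a configuration is determined, up to isomorphism, by the
   neighbourhoods of x and y on the hole and by whether x ~ y, so it is
   described by a graph on the 9 vertices 0..6 (the hole), 7 (x), 8 (y).
   If that small graph contains an induced P7, C4 or gem, the configuration
   cannot occur in G. *)

Definition cyc7 (i j : nat) : bool := (j == i.+1 %% 7) || (i == j.+1 %% 7).
Definition pathn (i j : nat) : bool := (j == i.+1) || (i == j.+1).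
Definition c4n (i j : nat) : bool := (j == i.+1 %% 4) || (i == j.+1 %% 4).
Definition gemn (i j : nat) : bool :=
  if i == 4 then j != 4 else if j == 4 then true else pathn i j.

Definition pattern (k : nat) : rel nat :=
  if k == 7 then pathn else if k == 4 then c4n else gemn.

Definition matches (la H : rel nat) (c : seq nat) : bool :=
  all (fun i => all (fun j => (i == j) || (la (nth 0 c i) (nth 0 c j) == H i j))
    (iota 0 (size c))) (iota 0 (size c)).

Definition certificate (la : rel nat) (N : nat) (c : seq nat) : bool :=
  [&& size c \in [:: 7; 4; 5], uniq c, all (gtn N) c & matches la (pattern (size c)) c].

(* Candidates for certificates: induced paths on 7 vertices, and induced
   paths on 3 or 4 vertices followed by an arbitrary extra vertex (which
   covers every C4 and every gem). *)
Definition extend (la : rel nat) (N : nat) (p : seq nat) : seq (seq nat) :=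
  [seq w :: p | w <- iota 0 N &
     (w \notin p) && (if p is u :: q then la u w && all (fun z => ~~ la z w) q else true)].

Fixpoint induced_paths (la : rel nat) (N n : nat) : seq (seq nat) :=
  if n is n'.+1 then flatten (map (extend la N) (induced_paths la N n')) else [:: [::]].

Definition candidates (la : rel nat) (N : nat) : seq (seq nat) :=
  let close n := [seq rcons p w | p <- induced_paths la N n, w <- iota 0 N] in
  induced_paths la N 7 ++ close 3 ++ close 4.

Definition bad (la : rel nat) (N : nat) : bool := has (certificate la N) (candidates la N).

Section Certificates.
Variables (T : finType) (adj : rel T).
Hypotheses (freeP7 : Hfree adj (@path_rel 7)) (freeC4 : Hfree adj (@cycle_rel 4))
  (free_gem : Hfree adj gem_rel).

Variables (g : nat -> T) (la : rel nat) (N : nat).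
Hypothesis g_inj : forall i j, i < N -> j < N -> g i = g j -> i = j.
Hypothesis g_adj : forall i j, i < N -> j < N -> i != j -> adj (g i) (g j) = la i j.

Lemma copy_of_matches k (H : rel 'I_k) (Hn : rel nat) (c : seq nat) :
  (forall i j : 'I_k, H i j = Hn i j) ->
  size c = k -> uniq c -> all (gtn N) c -> matches la Hn c ->
  exists f, induced_copy adj H f.
Proof.
move=> HHn sc uc cN mc.
have c_lt (i : 'I_k) : nth 0 c i < N.
  by apply: (allP cN); apply: mem_nth; rewrite sc.
exists (fun i => g (nth 0 c i)); split.
  move=> i j /(g_inj (c_lt i) (c_lt j)) /eqP.
  by rewrite nth_uniq ?sc // => /eqP; apply: val_inj.
move=> i j ij; rewrite g_adj ?c_lt ?nth_uniq ?sc //.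
have := allP mc i; rewrite mem_iota sc /= => /(_ (ltn_ord i)) /allP /(_ j).
rewrite mem_iota /= => /(_ (ltn_ord j)).
have ij' : nat_of_ord i != nat_of_ord j := ij.
by rewrite HHn (negbTE ij') => /eqP.
Qed.

Lemma certificate_absurd c : certificate la N c -> False.
Proof.
case/and4P; rewrite !inE => /or3P [] /eqP sc uc cN; rewrite /pattern sc /= => mc.
- by apply: freeP7; apply: (copy_of_matches (Hn := pathn)) mc.
- by apply: freeC4; apply: (copy_of_matches (Hn := c4n)) mc.
- by apply: free_gem; apply: (copy_of_matches (Hn := gemn)) mc.
Qed.

Lemma not_bad : ~~ bad la N.
Proof. by apply/hasP=> -[c _ /certificate_absurd]. Qed.

End Certificates.

Definition config (sx sy : nat -> bool) (b : bool) : rel nat := fun i j =>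
  if i < 7 then (if j < 7 then cyc7 i j else if j == 7 then sx i else sy i)
  else if j < 7 then (if i == 7 then sx j else sy j) else b.

Inductive kind := KX | KY | KZ.

Definition offsets (k : kind) : seq nat :=
  match k with KX => [:: 0; 3] | KY => [:: 0; 1; 2] | KZ => [:: 0; 3; 4] end.

Definition pat (k : kind) (i j : nat) : bool := has (fun d => j == (i + d) %% 7) (offsets k).

Definition distinct_types k1 i1 k2 i2 : bool :=
  has (fun j => pat k1 i1 j != pat k2 i2 j) (iota 0 7).

(* Two vertices of types (k1, i1), (k2, i2) with adjacency [~~ b] give a
   forbidden configuration, so in G their adjacency is [b]. *)
Definition forces k1 i1 k2 i2 (b : bool) : bool :=
  bad (config (pat k1 i1) (pat k2 i2) (~~ b)) 9.

(* [forces] for types (k1, i) and (k2, i + d), for all seven rotations i;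
   the two types are also checked to differ, so that such vertices are
   distinct. *)
Definition forced k1 k2 d b : bool :=
  all (fun i => forces k1 i k2 ((i + d) %% 7) b && distinct_types k1 i k2 ((i + d) %% 7))
    (iota 0 7).

Fixpoint allbits (n : nat) : seq (seq bool) :=
  if n is n'.+1 then [seq b :: s | b <- [:: true; false], s <- allbits n'] else [:: [::]].

Lemma allbitsP n s : size s = n -> s \in allbits n.
Proof.
elim: n s => [|n IH] [|b s] //= [] /IH sn.
by case: b; rewrite !mem_cat (map_f (cons _)) ?orbT.
Qed.

Definition has_type (k : kind) (s : seq bool) : bool :=
  has (fun i => all (fun j => nth false s j == pat k i j) (iota 0 7)) (iota 0 7).

Definition typed (s : seq bool) : bool :=
  [|| has_type KX s, has_type KY s | has_type KZ s].

Lemma attachment_types :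
  all (fun s => ~~ has id s || bad (config (nth false s) (nth false s) false) 8 || typed s)
    (allbits 7).
Proof. by vm_compute. Qed.

Lemma val_sh (i : 'I_7) k : val (sh i k) = (i + k) %% 7.
Proof. by rewrite /sh /= inordK // ltn_pmod. Qed.

Lemma val_sh0 (i : 'I_7) : val i = (i + 0) %% 7.
Proof. by rewrite addn0 modn_small. Qed.

Section SetFacts.
Variables (T : finType) (adj : rel T).

Lemma completeU (S U V : {set T}) :
  complete adj S U -> complete adj S V -> complete adj S (U :|: V).
Proof. by move=> SU SV x y xS; rewrite inE => /orP [] ?; [apply: SU | apply: SV]. Qed.

Lemma anticompleteU (S U V : {set T}) :
  anticomplete adj S U -> anticomplete adj S V -> anticomplete adj S (U :|: V).
Proof. by move=> SU SV x y xS; rewrite inE => /orP [] ?; [apply: SU | apply: SV]. Qed.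

Lemma cliqueU (S U : {set T}) : symmetric adj ->
  clique adj S -> clique adj U -> complete adj S U -> clique adj (S :|: U).
Proof.
move=> sym cS cU SU x y; rewrite !inE => /orP [] xS /orP [] yU xy.
- exact: cS.
- exact: SU.
- by rewrite sym; apply: SU.
- exact: cU.
Qed.

Lemma exclusiveU (S U V : {set T}) :
  S = set0 \/ U = set0 -> S = set0 \/ V = set0 -> S = set0 \/ U :|: V = set0.
Proof. by move=> [->|->]; [left | move=> [->|->]; [left | rewrite setU0; right]]. Qed.

End SetFacts.

Section Hole.
Variables (T : finType) (adj : rel T).
Hypotheses (adj_sym : symmetric adj) (freeP7 : Hfree adj (@path_rel 7))
  (freeC4 : Hfree adj (@cycle_rel 4)) (free_gem : Hfree adj gem_rel).
Variables (v : 'I_7 -> T) (hv : hole7 adj v).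

Local Notation A := (Aset v).
Local Notation NA := (NA adj v).
Local Notation X := (Xs adj v).
Local Notation Y := (Ys adj v).
Local Notation Z := (Zs adj v).

Definition Tset (k : kind) : 'I_7 -> {set T} :=
  match k with KX => X | KY => Y | KZ => Z end.

Lemma v_inj : injective v. Proof. by case: hv. Qed.

Lemma v_adj (i j : 'I_7) : i != j -> adj (v i) (v j) = cyc7 i j.
Proof. by case: hv => _ H /H ->. Qed.

Lemma v_in_A (k : 'I_7) : v k \in A. Proof. exact: imset_f. Qed.

Lemma NA_neq_v x k : x \in NA -> x != v k.
Proof. by rewrite inE => /andP [xA _]; apply: contraNneq xA => ->; apply: v_in_A. Qed.

Lemma nbA_eq x (S : {set T}) : S \subset A ->
  (nbA adj v x == S) = [forall k, adj x (v k) == (v k \in S)].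
Proof.
move=> SA; apply/eqP/forallP => [<- k | E]; first by rewrite inE v_in_A.
apply/setP => a; rewrite inE; case aA: (a \in A) => /=.
  by case/imsetP: aA => k _ ->; apply/eqP.
by apply/esym/negbTE; apply: contraFN aA; apply: (subsetP SA).
Qed.

Lemma Tset_pat k (i : 'I_7) x :
  (x \in Tset k i) = (x \in NA) && [forall j : 'I_7, adj x (v j) == pat k i j].
Proof.
case: k; rewrite /= inE nbA_eq ?subUset ?sub1set ?v_in_A //;
  congr (_ && _); apply: eq_forallb => j;
  rewrite !inE !(inj_eq v_inj) -!val_eqE /= !val_sh /pat /= addn0;
  by rewrite (modn_small (ltn_ord i)) orbF ?orbA.
Qed.

Lemma Tset_adj k i x : x \in Tset k i -> forall j : 'I_7, adj x (v j) = pat k i j.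
Proof. by rewrite Tset_pat => /andP [_ /forallP E] j; apply/eqP. Qed.

Lemma Tset_NA k i x : x \in Tset k i -> x \in NA.
Proof. by rewrite Tset_pat => /andP []. Qed.

Definition embed (x y : T) (i : nat) : T :=
  if i < 7 then v (inord i) else if i == 7 then x else y.

Lemma vertex_cases i : i < 9 -> i < 7 \/ i = 7 \/ i = 8.
Proof. lia. Qed.

(* The embedding is faithful on [0, N); vertex 8 (that is, y) only matters
   when N = 9. *)
Lemma embed_faithful (N : nat) x y (sx sy : nat -> bool) (b : bool) :
  N <= 9 -> x \in NA -> (8 < N -> [/\ y \in NA, x != y & adj x y = b]) ->
  (forall j : 'I_7, adj x (v j) = sx j) -> (forall j : 'I_7, adj y (v j) = sy j) ->
  ~~ bad (config sx sy b) N.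
Proof.
move=> N9 xN yN Ex Ey; apply: (not_bad freeP7 freeC4 free_gem (g := embed x y)).
  move=> i j iN jN.
  have := vertex_cases (leq_trans iN N9); have := vertex_cases (leq_trans jN N9).
  rewrite /embed => -[hj|[ej|ej]] [hi|[ei|ei]]; subst; rewrite ?hi ?hj //=.
  - by move/v_inj/(congr1 val); rewrite /= !inordK.
  - by move=> e; move: (NA_neq_v (inord j) xN); rewrite e eqxx.
  - by case: (yN iN) => yNA _ _ e; move: (NA_neq_v (inord j) yNA); rewrite e eqxx.
  - by move=> e; move: (NA_neq_v (inord i) xN); rewrite e eqxx.
  - by case: (yN iN) => _ + _ e; rewrite e eqxx.
  - by case: (yN jN) => yNA _ _ e; move: (NA_neq_v (inord i) yNA); rewrite e eqxx.
  - by case: (yN jN) => _ + _ e; rewrite e eqxx.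
move=> i j iN jN ij.
have := vertex_cases (leq_trans iN N9); have := vertex_cases (leq_trans jN N9).
rewrite /embed /config => -[hj|[ej|ej]] [hi|[ei|ei]]; subst; rewrite ?hi ?hj //=.
- by rewrite v_adj ?inordK // -val_eqE /= !inordK.
- by rewrite Ex inordK.
- by rewrite Ey inordK.
- by rewrite adj_sym Ex inordK.
- by case: (yN iN) => _ _ <-; rewrite adj_sym.
- by rewrite adj_sym Ey inordK.
- by case: (yN jN) => _ _ <-.
Qed.

Lemma pair_forced k1 k2 (i1 i2 : 'I_7) b x y :
  x \in Tset k1 i1 -> y \in Tset k2 i2 -> x != y -> forces k1 i1 k2 i2 b -> adj x y = b.
Proof.
move=> Hx Hy xy; apply: contraTeq => ne.
apply: (embed_faithful (N := 9) _) (Tset_NA Hx) _ (Tset_adj Hx) (Tset_adj Hy) => // _.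
by split; [exact: Tset_NA Hy | exact: xy | move: ne; case: (adj x y); case: b].
Qed.

Lemma distinct_types_neq k1 k2 (i1 i2 : 'I_7) x y :
  x \in Tset k1 i1 -> y \in Tset k2 i2 -> distinct_types k1 i1 k2 i2 -> x != y.
Proof.
move=> Hx Hy /hasP [j]; rewrite mem_iota => /andP [_ j7].
apply: contraNneq => exy; subst y.
by rewrite -(Tset_adj Hx (Ordinal j7)) -(Tset_adj Hy (Ordinal j7)).
Qed.

Lemma adj_forced k1 k2 d b (i j : 'I_7) x y : val j = (i + d) %% 7 -> forced k1 k2 d b ->
  x \in Tset k1 i -> y \in Tset k2 j -> adj x y = b.
Proof.
move=> ej /allP/(_ i); rewrite mem_iota ltn_ord -ej => /(_ isT) /andP [fb dt] Hx Hy.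
exact: pair_forced Hx Hy (distinct_types_neq Hx Hy dt) fb.
Qed.

Lemma complete_forced k1 k2 d (i j : 'I_7) : val j = (i + d) %% 7 ->
  forced k1 k2 d true -> complete adj (Tset k1 i) (Tset k2 j).
Proof. by move=> ej f x y; apply: adj_forced ej f. Qed.

Lemma anticomplete_forced k1 k2 d (i j : 'I_7) : val j = (i + d) %% 7 ->
  forced k1 k2 d false -> anticomplete adj (Tset k1 i) (Tset k2 j).
Proof. by move=> ej f x y Hx Hy; rewrite (adj_forced ej f Hx Hy). Qed.

Lemma exclusive_forced k1 k2 d (i j : 'I_7) : val j = (i + d) %% 7 ->
  forced k1 k2 d true -> forced k1 k2 d false -> Tset k1 i = set0 \/ Tset k2 j = set0.
Proof.
move=> ej ft ff; case: (set_0Vmem (Tset k1 i)) => [|[x Hx]]; [by left | right].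
apply/setP => y; rewrite inE; apply/negP => Hy.
by have := adj_forced ej ft Hx Hy; rewrite (adj_forced ej ff Hx Hy).
Qed.

(* The kinds cannot be inferred from goals stated with X, Y, Z; the offset
   is read off the index equation. *)
Arguments complete_forced k1 k2 {d i j}.
Arguments anticomplete_forced k1 k2 {d i j}.
Arguments exclusive_forced k1 k2 {d i j}.

Lemma clique_forced k (i : 'I_7) :
  all (fun i => forces k i k i true) (iota 0 7) -> clique adj (Tset k i).
Proof.
move=> /allP/(_ i); rewrite mem_iota ltn_ord => /(_ isT) f x y Hx Hy xy.
exact: pair_forced Hx Hy xy f.
Qed.

Lemma NA_typed x : x \in NA -> exists k i, x \in Tset k i.
Proof.
move=> xN; pose s := [seq adj x (v (inord j)) | j <- iota 0 7].
have Es (j : 'I_7) : adj x (v j) = nth false s j.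
  by rewrite (nth_map 0) ?size_iota // nth_iota // add0n inord_val.
have s7 : size s = 7 by rewrite size_map size_iota.
have := allP attachment_types s (allbitsP s7).
case/orP => [/orP [] |].
- case/negP; move: (xN); rewrite inE => /andP [_ /existsP [a /andP [aA xa]]].
  case/imsetP: aA xa => k _ -> xa; apply/hasP; exists true => //.
  by rewrite -xa Es mem_nth // s7.
- move=> forbidden; exfalso; move: forbidden; apply/negP.
  by apply: (embed_faithful (N := 8) (y := x) isT xN _ Es Es).
- case/or3P => /hasP [i]; rewrite mem_iota => /andP [_ i7] /allP Hi;
    [exists KX | exists KY | exists KZ]; exists (Ordinal i7);
    rewrite Tset_pat xN; apply/forallP => j;
    by rewrite Es; apply: Hi; rewrite mem_iota /=.
Qed.

Lemma NA_partition : NA = \bigcup_(i : 'I_7) (X i :|: Y i :|: Z i).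
Proof.
apply/setP => x; apply/idP/bigcupP => [/NA_typed [k [i Hx]] | [i _]].
  by exists i => //; case: k Hx => /= Hx; rewrite !in_setU Hx ?orbT.
by rewrite !in_setU => /orP [/orP [] | ] H;
  [apply: (Tset_NA (k := KX)) H | apply: (Tset_NA (k := KY)) H | apply: (Tset_NA (k := KZ)) H].
Qed.

Arguments clique_forced k {i}.

Lemma type_cliques i : clique adj (X i :|: Z i) /\ clique adj (Y i).
Proof.
split; last by apply: (clique_forced KY); vm_compute.
apply: cliqueU => //.
- by apply: (clique_forced KX); vm_compute.
- by apply: (clique_forced KZ); vm_compute.
- by apply: (complete_forced KX KZ (val_sh0 i)); vm_compute.
Qed.

Lemma Y_Y_adjacency i :
  complete adj (Y i) (Y (sh i 1) :|: Y (sh i 6)) /\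
  anticomplete adj (Y i) (Y (sh i 2) :|: Y (sh i 3) :|: Y (sh i 4) :|: Y (sh i 5)).
Proof.
split.
- apply: completeU.
  + by apply: (complete_forced KY KY (val_sh i 1)); vm_compute.
  + by apply: (complete_forced KY KY (val_sh i 6)); vm_compute.
- do !apply: anticompleteU.
  + by apply: (anticomplete_forced KY KY (val_sh i 2)); vm_compute.
  + by apply: (anticomplete_forced KY KY (val_sh i 3)); vm_compute.
  + by apply: (anticomplete_forced KY KY (val_sh i 4)); vm_compute.
  + by apply: (anticomplete_forced KY KY (val_sh i 5)); vm_compute.
Qed.

Lemma X_X_adjacency i :
  (X i = set0 \/ X (sh i 2) :|: X (sh i 5) = set0) /\
  anticomplete adj (X i) (X (sh i 1) :|: X (sh i 3) :|: X (sh i 4) :|: X (sh i 6)).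
Proof.
split.
- apply: exclusiveU.
  + by apply: (exclusive_forced KX KX (val_sh i 2)); vm_compute.
  + by apply: (exclusive_forced KX KX (val_sh i 5)); vm_compute.
- do !apply: anticompleteU.
  + by apply: (anticomplete_forced KX KX (val_sh i 1)); vm_compute.
  + by apply: (anticomplete_forced KX KX (val_sh i 3)); vm_compute.
  + by apply: (anticomplete_forced KX KX (val_sh i 4)); vm_compute.
  + by apply: (anticomplete_forced KX KX (val_sh i 6)); vm_compute.
Qed.

Lemma X_Y_adjacency i :
  complete adj (X i) (Y (sh i 2) :|: Y (sh i 6)) /\
  anticomplete adj (X i) (Y i :|: Y (sh i 1) :|: Y (sh i 3) :|: Y (sh i 4) :|: Y (sh i 5)).
Proof.
split.
- apply: completeU.
  + by apply: (complete_forced KX KY (val_sh i 2)); vm_compute.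
  + by apply: (complete_forced KX KY (val_sh i 6)); vm_compute.
- do !apply: anticompleteU.
  + by apply: (anticomplete_forced KX KY (val_sh0 i)); vm_compute.
  + by apply: (anticomplete_forced KX KY (val_sh i 1)); vm_compute.
  + by apply: (anticomplete_forced KX KY (val_sh i 3)); vm_compute.
  + by apply: (anticomplete_forced KX KY (val_sh i 4)); vm_compute.
  + by apply: (anticomplete_forced KX KY (val_sh i 5)); vm_compute.
Qed.

Lemma Z_Z_adjacency i :
  (Z i = set0 \/ Z (sh i 3) :|: Z (sh i 4) = set0) /\
  anticomplete adj (Z i) (Z (sh i 1) :|: Z (sh i 2) :|: Z (sh i 5) :|: Z (sh i 6)).
Proof.
split.
- apply: exclusiveU.
  + by apply: (exclusive_forced KZ KZ (val_sh i 3)); vm_compute.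
  + by apply: (exclusive_forced KZ KZ (val_sh i 4)); vm_compute.
- do !apply: anticompleteU.
  + by apply: (anticomplete_forced KZ KZ (val_sh i 1)); vm_compute.
  + by apply: (anticomplete_forced KZ KZ (val_sh i 2)); vm_compute.
  + by apply: (anticomplete_forced KZ KZ (val_sh i 5)); vm_compute.
  + by apply: (anticomplete_forced KZ KZ (val_sh i 6)); vm_compute.
Qed.

Lemma Z_X_adjacency i :
  (Z i = set0 \/ X i :|: X (sh i 4) :|: X (sh i 6) = set0) /\
  anticomplete adj (Z i) (X (sh i 1) :|: X (sh i 2) :|: X (sh i 3) :|: X (sh i 5)).
Proof.
split.
- do !apply: exclusiveU.
  + by apply: (exclusive_forced KZ KX (val_sh0 i)); vm_compute.
  + by apply: (exclusive_forced KZ KX (val_sh i 4)); vm_compute.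
  + by apply: (exclusive_forced KZ KX (val_sh i 6)); vm_compute.
- do !apply: anticompleteU.
  + by apply: (anticomplete_forced KZ KX (val_sh i 1)); vm_compute.
  + by apply: (anticomplete_forced KZ KX (val_sh i 2)); vm_compute.
  + by apply: (anticomplete_forced KZ KX (val_sh i 3)); vm_compute.
  + by apply: (anticomplete_forced KZ KX (val_sh i 5)); vm_compute.
Qed.

Lemma Z_Y_adjacency i :
  complete adj (Z i) (Y (sh i 2) :|: Y (sh i 3) :|: Y (sh i 6)) /\
  anticomplete adj (Z i) (Y i :|: Y (sh i 1) :|: Y (sh i 4) :|: Y (sh i 5)).
Proof.
split.
- do !apply: completeU.
  + by apply: (complete_forced KZ KY (val_sh i 2)); vm_compute.
  + by apply: (complete_forced KZ KY (val_sh i 3)); vm_compute.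
  + by apply: (complete_forced KZ KY (val_sh i 6)); vm_compute.
- do !apply: anticompleteU.
  + by apply: (anticomplete_forced KZ KY (val_sh0 i)); vm_compute.
  + by apply: (anticomplete_forced KZ KY (val_sh i 1)); vm_compute.
  + by apply: (anticomplete_forced KZ KY (val_sh i 4)); vm_compute.
  + by apply: (anticomplete_forced KZ KY (val_sh i 5)); vm_compute.
Qed.

End Hole.

Theorem mainTheorem9 (T : finType) (adj : rel T) :
  symmetric adj -> irreflexive adj ->
  Hfree adj (@path_rel 7) -> Hfree adj (@cycle_rel 4) -> Hfree adj gem_rel ->
  forall v : 'I_7 -> T, hole7 adj v ->
  let X := Xs adj v in let Y := Ys adj v in let Z := Zs adj v in
  (* (a) *)
  NA adj v = \bigcup_(i : 'I_7) (X i :|: Y i :|: Z i) /\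
  forall i : 'I_7,
  (* (b) *)
  (clique adj (X i :|: Z i) /\ clique adj (Y i)) /\
  (* (c) *)
  (complete adj (Y i) (Y (sh i 1) :|: Y (sh i 6)) /\
   anticomplete adj (Y i) (Y (sh i 2) :|: Y (sh i 3) :|: Y (sh i 4) :|: Y (sh i 5))) /\
  (* (d) *)
  ((X i = set0 \/ X (sh i 2) :|: X (sh i 5) = set0) /\
   anticomplete adj (X i) (X (sh i 1) :|: X (sh i 3) :|: X (sh i 4) :|: X (sh i 6))) /\
  (* (e) *)
  (complete adj (X i) (Y (sh i 2) :|: Y (sh i 6)) /\
   anticomplete adj (X i) (Y i :|: Y (sh i 1) :|: Y (sh i 3) :|: Y (sh i 4) :|: Y (sh i 5))) /\
  (* (f) *)
  ((Z i = set0 \/ Z (sh i 3) :|: Z (sh i 4) = set0) /\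
   anticomplete adj (Z i) (Z (sh i 1) :|: Z (sh i 2) :|: Z (sh i 5) :|: Z (sh i 6))) /\
  (* (g) *)
  ((Z i = set0 \/ X i :|: X (sh i 4) :|: X (sh i 6) = set0) /\
   anticomplete adj (Z i) (X (sh i 1) :|: X (sh i 2) :|: X (sh i 3) :|: X (sh i 5))) /\
  (* (h) *)
  (complete adj (Z i) (Y (sh i 2) :|: Y (sh i 3) :|: Y (sh i 6)) /\
   anticomplete adj (Z i) (Y i :|: Y (sh i 1) :|: Y (sh i 4) :|: Y (sh i 5))).
Proof.
move=> sym _ freeP7 freeC4 free_gem v hv X Y Z.
split; first exact: NA_partition.
move=> i; split; first exact: type_cliques.
split; first exact: Y_Y_adjacency.
split; first exact: X_X_adjacency.
split; first exact: X_Y_adjacency.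
split; first exact: Z_Z_adjacency.
split; first exact: Z_X_adjacency.
exact: Z_Y_adjacency.
Qed.
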